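(* Let $A\in\mathbb{R}^{m\times m}$ with $S_{\max}(A)>0$, $B\in\mathbb{R}^{m\times n}$, $k>0$, and let $P$ be a symmetric positive definite solution of $A^{\mathrm T}P+PA-2PBB^{\mathrm T}P+kI_m=0$. Let $x_g\in\mathbb{R}^m$ with $\|x_g\|\le\overline{x}_g$, and let $d:[0,\infty)\to\mathbb{R}^m$ be continuous with $\|d(t)\|\le\overline{d}$ for all $t\ge0$. Let $0=t_0<t_1<t_2<\cdots$ be servicing instants with $t_s\to\infty$. Consider the system $$\dot x(t)=Ax(t)+Bu(t)+d(t),\qquad u(t)=B^{\mathrm T}P\,(x_g-\hat x(t)),$$ $$\dot{\hat x}(t)=-A(x_g-\hat x(t))+Bu(t)\ \text{ for } t\in[t_s,t_{s+1}),\qquad \hat x(t_s)=x(t_s)\ \text{ for all } s\ge0,$$ with $x$ continuous and $\hat x$ right-continuous, and define $e(t)=x_g-x(t)$. Let $V_T>0$, $\kappa=S_{\max}(A)\overline{x}_g+\overline{d}$, and suppose that for every $s\ge0$, $$t_{s+1}-t_s\le\frac{1}{S_{\max}(A)}\ln\!\left(\frac{V_TS_{\max}(A)}{\kappa}+1\right).$$ Then, with $\rho\triangleq 2\overline{d}S_{\max}(P)+2V_TS_{\max}(PBB^{\mathrm T}P)+2S_{\max}(PA)\overline{x}_g$, for all $t\ge0$, $$\|e(t)\|\le\frac{\lambda_{\max}(P)\rho}{\lambda_{\min}(P)k}\left(1-e^{-\frac{k}{2\lambda_{\max}(P)}t}\right)+\sqrt{\frac{\lambda_{\max}(P)}{\lambda_{\min}(P)}}\,\|e(0)\|\,e^{-\frac{k}{2\lambda_{\max}(P)}t};$$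 moreover $e$, $x_g-\hat x$ and $u$ are bounded on $[0,\infty)$. *)

From HB Require Import structures.
From mathcomp Require Import all_boot all_order all_algebra.
From mathcomp Require Import all_classical all_reals all_analysis.
Set Implicit Arguments. Unset Strict Implicit. Unset Printing Implicit Defensive.
Import Order.TTheory GRing.Theory Num.Theory.
Import numFieldNormedType.Exports.
Local Open Scope ring_scope.
Local Open Scope classical_set_scope.

Definition vnorm {R : realType} {m : nat} (v : 'cV[R]_m) : R :=
  Num.sqrt (\sum_(i < m) v i 0 ^+ 2).

(* Largest / smallest (real) eigenvalue of a square matrix
   (used for symmetric matrices, whose spectrum is real). *)
Definition lambda_max {R : realType} {m : nat} (M : 'M[R]_m) : R :=
  sup [set a : R | eigenvalue M a].
Definition lambda_min {R : realType} {m : nat} (M : 'M[R]_m) : R :=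
  inf [set a : R | eigenvalue M a].

Definition Smax {R : realType} {p q : nat} (M : 'M[R]_(p, q)) : R :=
  Num.sqrt (lambda_max (M^T *m M)).

(* Between two servicing instants the estimation gap [x - xh] solves a linear
   ODE driven by the bounded term [A xg + d] and starting from 0, so it grows at
   most like [kappa / Smax A * (exp (Smax A * t) - 1)]; the dwell-time condition
   keeps it below [VT].  Given this, the Riccati equation makes [V = e^T P e] a
   Lyapunov function with [V' <= - k |e|^2 + rho |e|], hence [W = sqrt V]
   satisfies [W' <= - c W + rho / (2 sqrt (lambda_min P))] with
   [c = k / (2 lambda_max P)].  Grönwall's inequality on each servicing
   interval, chained over the intervals, gives the exponential estimate, from
   which boundedness of [e], [xg - xh] and [u] follows.  Square roots are
   regularized as [sqrt (_ + eta^2)] to keep them differentiable, and [eta] is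
   sent to 0 at the end. *)

From HB Require Import structures.
From mathcomp Require Import all_boot all_order all_algebra.
From mathcomp Require Import all_classical all_reals all_analysis.
From mathcomp Require Import ring lra.
Import Order.TTheory GRing.Theory Num.Theory.
Import numFieldNormedType.Exports.
Local Open Scope ring_scope.
Local Open Scope classical_set_scope.
Set Implicit Arguments. Unset Strict Implicit. Unset Printing Implicit Defensive.

Lemma cvg_sum_ord (R : realType) (T : Type) (F : set_system T) {FF : Filter F} p
    (f : 'I_p -> T -> R) (l : 'I_p -> R) :
  (forall i, f i @ F --> l i) -> (fun x => \sum_(i < p) f i x) @ F --> \sum_(i < p) l i.
Proof.
move=> fl; rewrite -fct_sumE.
by elim/big_ind2 : _ => // [|g1 l1 g2 l2 c1 c2]; [exact: cvg_cst | exact: cvgD].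
Qed.

Section EuclideanSpace.
Variable R : realType.
Implicit Types (p : nat).

Definition vdot {p} (v w : 'cV[R]_p) : R := (v^T *m w) 0 0.

Lemma vdotE p (v w : 'cV[R]_p) : vdot v w = \sum_i v i 0 * w i 0.
Proof. by rewrite /vdot mxE; apply: eq_bigr => i _; rewrite mxE. Qed.

Lemma vdotC p (v w : 'cV[R]_p) : vdot v w = vdot w v.
Proof. by rewrite !vdotE; apply: eq_bigr => i _; rewrite mulrC. Qed.

Lemma vdotDl p (v1 v2 w : 'cV[R]_p) : vdot (v1 + v2) w = vdot v1 w + vdot v2 w.
Proof. by rewrite !vdotE -big_split; apply: eq_bigr => i _; rewrite !mxE mulrDl. Qed.

Lemma vdotZl p a (v w : 'cV[R]_p) : vdot (a *: v) w = a * vdot v w.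
Proof. by rewrite !vdotE mulr_sumr; apply: eq_bigr => i _; rewrite !mxE mulrA. Qed.

Lemma vdotNl p (v w : 'cV[R]_p) : vdot (- v) w = - vdot v w.
Proof. by rewrite -scaleN1r vdotZl mulN1r. Qed.

Lemma vdotBl p (v1 v2 w : 'cV[R]_p) : vdot (v1 - v2) w = vdot v1 w - vdot v2 w.
Proof. by rewrite vdotDl vdotNl. Qed.

Lemma vdot0l p (w : 'cV[R]_p) : vdot 0 w = 0.
Proof. by rewrite -(scale0r 0) vdotZl mul0r. Qed.

Lemma vdotDr p (v1 v2 w : 'cV[R]_p) : vdot w (v1 + v2) = vdot w v1 + vdot w v2.
Proof. by rewrite !(vdotC w) vdotDl. Qed.

Lemma vdotZr p a (v w : 'cV[R]_p) : vdot w (a *: v) = a * vdot w v.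
Proof. by rewrite !(vdotC w) vdotZl. Qed.

Lemma vdotNr p (v w : 'cV[R]_p) : vdot w (- v) = - vdot w v.
Proof. by rewrite !(vdotC w) vdotNl. Qed.

Lemma vdotBr p (v1 v2 w : 'cV[R]_p) : vdot w (v1 - v2) = vdot w v1 - vdot w v2.
Proof. by rewrite !(vdotC w) vdotBl. Qed.

Lemma vdot0r p (w : 'cV[R]_p) : vdot w 0 = 0.
Proof. by rewrite vdotC vdot0l. Qed.

Lemma vdot_mulmxr p q (M : 'M[R]_(p, q)) v w : vdot v (M *m w) = vdot (M^T *m v) w.
Proof. by rewrite /vdot trmx_mul trmxK mulmxA. Qed.

Lemma vdotvv_ge0 p (v : 'cV[R]_p) : 0 <= vdot v v.
Proof. by rewrite vdotE sumr_ge0 // => i _; rewrite -expr2 sqr_ge0. Qed.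

Lemma vdotvv_eq0 p (v : 'cV[R]_p) : (vdot v v == 0) = (v == 0).
Proof.
apply/idP/eqP => [|->]; last by rewrite vdot0l.
rewrite vdotE psumr_eq0 => [/allP v0|i _]; last by rewrite -expr2 sqr_ge0.
apply/matrixP => i j; rewrite (ord1 j) [RHS]mxE.
by have := v0 i (mem_index_enum i); rewrite /= -expr2 sqrf_eq0 => /eqP.
Qed.

Lemma vdotvv_gt0 p (v : 'cV[R]_p) : (0 < vdot v v) = (v != 0).
Proof. by rewrite lt_def vdotvv_eq0 vdotvv_ge0 andbT. Qed.

Lemma vnormE p (v : 'cV[R]_p) : vnorm v = Num.sqrt (vdot v v).
Proof. by rewrite /vnorm vdotE; congr Num.sqrt; apply: eq_bigr => i _; rewrite expr2. Qed.

Lemma vnorm_ge0 p (v : 'cV[R]_p) : 0 <= vnorm v.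
Proof. by rewrite vnormE sqrtr_ge0. Qed.

Lemma vnorm_sqr p (v : 'cV[R]_p) : vnorm v ^+ 2 = vdot v v.
Proof. by rewrite vnormE sqr_sqrtr // vdotvv_ge0. Qed.

Lemma vnorm_eq0 p (v : 'cV[R]_p) : (vnorm v == 0) = (v == 0).
Proof. by rewrite vnormE sqrtr_eq0 le_eqVlt ltNge vdotvv_ge0 orbF vdotvv_eq0. Qed.

Lemma vdot_cauchy_schwarz p (v w : 'cV[R]_p) : `|vdot v w| <= vnorm v * vnorm w.
Proof.
have [->|v0] := eqVneq v 0; first by rewrite vdot0l normr0 mulr_ge0 ?vnorm_ge0.
have [->|w0] := eqVneq w 0; first by rewrite vdot0r normr0 mulr_ge0 ?vnorm_ge0.
have a0 : 0 < vnorm v by rewrite lt_def vnorm_eq0 v0 vnorm_ge0.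
have b0 : 0 < vnorm w by rewrite lt_def vnorm_eq0 w0 vnorm_ge0.
have diff_ge0 := vdotvv_ge0 (vnorm w *: v - vnorm v *: w).
have sum_ge0 := vdotvv_ge0 (vnorm w *: v + vnorm v *: w).
rewrite !(vdotDl, vdotBl, vdotDr, vdotBr, vdotNl, vdotNr, vdotZl, vdotZr) in diff_ge0 sum_ge0.
rewrite -!vnorm_sqr (vdotC w v) in diff_ge0 sum_ge0.
set a := vnorm v in diff_ge0 sum_ge0 a0 *; set b := vnorm w in diff_ge0 sum_ge0 b0 *.
set c := vdot v w in diff_ge0 sum_ge0 *.
have ab0 : 0 < a * b by rewrite mulr_gt0.
(* expanding |b v -+ a w|^2 >= 0 gives 2ab (ab -+ c) >= 0 *)
have E1 : 0 <= (a * b) * (a * b - c) by nra.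
have E2 : 0 <= (a * b) * (a * b + c) by nra.
rewrite pmulr_rge0 // subr_ge0 in E1; rewrite pmulr_rge0 // in E2.
by rewrite ler_norml E1 andbT; lra.
Qed.

Lemma ler_vnormD p (v w : 'cV[R]_p) : vnorm (v + w) <= vnorm v + vnorm w.
Proof.
have /andP[_ vw] : - (vnorm v * vnorm w) <= vdot v w <= vnorm v * vnorm w.
  by rewrite -ler_norml vdot_cauchy_schwarz.
rewrite [leLHS]vnormE -[leRHS]ger0_norm ?addr_ge0 ?vnorm_ge0 //.
rewrite -sqrtr_sqr ler_sqrt ?sqr_ge0 // vdotDl !vdotDr (vdotC w v) -!vnorm_sqr.
nra.
Qed.

End EuclideanSpace.

Section SymmetricSpectrum.
Variable R : realType.
Implicit Types (p q : nat).

Lemma linear_coef_eq0 (b c : R) : (forall t : R, t * b + t ^+ 2 * c <= 0) -> b = 0.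
Proof.
suff le0 : forall b c : R, (forall t : R, t * b + t ^+ 2 * c <= 0) -> b <= 0.
  move=> h; apply/eqP; rewrite eq_le (le0 b c h) /= -oppr_le0.
  by apply: (le0 _ c) => t; have := h (- t); rewrite sqrrN; nra.
move=> {}b {}c h; rewrite leNgt; apply/negP => b0.
pose D := `|c| + 1.
have D0 : 0 < D by rewrite ltr_pwDr // normr_ge0.
(* at t = b / 2D the linear term beats the quadratic one *)
pose t := b / (2 * D).
have t0 : 0 < t by rewrite divr_gt0 // mulr_gt0.
have tD : t * D = b / 2 by rewrite /t; field; rewrite gt_eqF.
have cn : - `|c| <= c by rewrite lerNl -normrN ler_norm.
by have := h t; rewrite /D in tD; nra.
Qed.

Lemma compact_unit_sphere p : compact [set r : 'rV[R]_p | vdot r^T r^T = 1].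
Proof.
have gc : continuous (fun r : 'rV[R]_p => vdot r^T r^T).
  have -> : (fun r : 'rV[R]_p => vdot r^T r^T) = fun r => \sum_i r 0 i * r 0 i.
    by apply/funext => r; rewrite vdotE; apply: eq_bigr => i _; rewrite !mxE.
  move=> r; apply: (@cvg_sum_ord _ _ (nbhs r)) => i.
  by apply: cvgM; exact: coord_continuous.
apply: bounded_closed_compact.
  exists 1; split => // M M1 r /= sr.
  rewrite (_ : `|r| = mx_norm r) // mx_normrE.
  apply: bigmax_le => [|[i j] _ /=]; first by rewrite (le_trans ler01) // ltW.
  rewrite (ord1 i).
  have : r 0 j ^+ 2 <= 1.
    rewrite -sr vdotE (bigD1 j) //= !mxE expr2 lerDl.
    by apply: sumr_ge0 => l _; rewrite !mxE -expr2 sqr_ge0.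
  rewrite -(@ler_sqrt R _ 1 ler01) sqrtr_sqr sqrtr1 => rj.
  by rewrite (le_trans rj) // ltW.
rewrite (_ : [set r | _] = (fun r : 'rV[R]_p => vdot r^T r^T) @^-1` [set 1]) //.
apply: (proj1 (continuous_closedP _) gc).
by apply: compact_closed; [exact: Rhausdorff | exact: compact_set1].
Qed.

Lemma rayleigh_max_exists p (S : 'M[R]_p) : (0 < p)%N ->
  exists2 v : 'cV[R]_p, vdot v v = 1 &
    forall w, vdot w (S *m w) <= vdot v (S *m v) * vdot w w.
Proof.
move=> p0.
pose f := fun r : 'rV[R]_p => vdot r^T (S *m r^T).
have sph0 : [set r : 'rV[R]_p | vdot r^T r^T = 1] !=set0.
  exists (\row_j ((j == Ordinal p0)%:R : R)).
  rewrite /= vdotE (bigD1 (Ordinal p0)) //= big1 => [|j /negPf jn].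
    by rewrite !mxE eqxx mulr1 addr0.
  by rewrite !mxE jn mulr0.
have fc : continuous f.
  have -> : f = (fun r => \sum_i r 0 i * \sum_j S i j * r 0 j).
    apply/funext => r; rewrite /f vdotE; apply: eq_bigr => i _; rewrite !mxE.
    by congr (_ * _); apply: eq_bigr => j _; rewrite !mxE.
  move=> r; apply: (@cvg_sum_ord _ _ (nbhs r)) => i.
  apply: cvgM; first exact: coord_continuous.
  apply: cvg_sum_ord => j; apply: cvgM; first exact: cvg_cst.
  exact: coord_continuous.
have [c /set_mem c1 cmax] :=
  EVT_max_rV sph0 (@compact_unit_sphere p) (continuous_subspaceT fc).
exists c^T => // w; have [->|w0] := eqVneq w 0; first by rewrite mulmx0 !vdot0l mulr0.
set nn := vdot w w; have nn0 : 0 < nn by rewrite vdotvv_gt0.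
set s := Num.sqrt nn; have s0 : 0 < s by rewrite sqrtr_gt0.
have s2 : s ^+ 2 = nn by rewrite sqr_sqrtr // ltW.
have ws : vdot (s^-1 *: w)^T^T (s^-1 *: w)^T^T = 1.
  by rewrite trmxK vdotZl vdotZr -/nn -s2; field; exact: lt0r_neq0.
have := cmax _ (mem_set ws); rewrite /f trmxK -scalemxAr vdotZl vdotZr.
rewrite (_ : s^-1 * (s^-1 * _) = vdot w (S *m w) / nn) ?ler_pdivrMr //.
by rewrite -s2; field; exact: lt0r_neq0.
Qed.

(* A maximiser of the Rayleigh quotient is an eigenvector: the first variation
   of w |-> <w, S w> - mu <w, w> at v must vanish. *)
Lemma rayleigh_max_eigen p (S : 'M[R]_p) (v : 'cV[R]_p) : S^T = S ->
  vdot v v = 1 -> (forall w, vdot w (S *m w) <= vdot v (S *m v) * vdot w w) ->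
  S *m v = vdot v (S *m v) *: v.
Proof.
move=> Ssym v1 vmax; set mu := vdot v (S *m v) in vmax *.
have var : forall w t, t * (2 * (vdot w (S *m v) - mu * vdot w v)) +
    t ^+ 2 * (vdot w (S *m w) - mu * vdot w w) <= 0.
  move=> w t; have := vmax (v + t *: w).
  rewrite mulmxDr -scalemxAr !(vdotDl, vdotDr, vdotZl, vdotZr).
  rewrite [vdot v (S *m w)]vdot_mulmxr Ssym (vdotC v w) (vdotC (S *m v) w) v1 -/mu.
  nra.
apply/eqP; rewrite -subr_eq0 -vdotvv_eq0.
have := linear_coef_eq0 (var (S *m v - mu *: v)).
by rewrite -vdotZr -vdotBr => /eqP; rewrite mulf_eq0 pnatr_eq0.
Qed.

Lemma sym_eigen_max p (S : 'M[R]_p) : (0 < p)%N -> S^T = S ->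
  exists mu, exists2 v : 'cV[R]_p, v != 0 &
    S *m v = mu *: v /\ forall w, vdot w (S *m w) <= mu * vdot w w.
Proof.
move=> p0 Ssym; have [v v1 vmax] := rayleigh_max_exists S p0.
exists (vdot v (S *m v)), v; last by split => //; exact: rayleigh_max_eigen.
by rewrite -vdotvv_gt0 v1 ltr01.
Qed.

Lemma sym_eigen_min p (S : 'M[R]_p) : (0 < p)%N -> S^T = S ->
  exists mu, exists2 v : 'cV[R]_p, v != 0 &
    S *m v = mu *: v /\ forall w, mu * vdot w w <= vdot w (S *m w).
Proof.
move=> p0 Ssym; have NSsym : (- S)^T = - S by rewrite linearN /= Ssym.
have [mu [v v0 [Sv vmax]]] := sym_eigen_max p0 NSsym.
exists (- mu), v => //; split; first by rewrite scaleNr -Sv mulNmx opprK.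
by move=> w; have := vmax w; rewrite mulNmx vdotNr; lra.
Qed.

Lemma sym_eigenvalueP p (S : 'M[R]_p) a : S^T = S ->
  reflect (exists2 v : 'cV[R]_p, v != 0 & S *m v = a *: v) (eigenvalue S a).
Proof.
move=> Ssym; apply: (iffP eigenvalueP) => -[v]; [move=> Sv v0 | move=> v0 Sv]; exists v^T;
  rewrite ?trmx_eq0 //; rewrite -{1}Ssym -trmx_mul Sv;
  by apply/matrixP => i j; rewrite !mxE.
Qed.

Lemma lambda_max_eq p (S : 'M[R]_p) mu (v : 'cV[R]_p) : S^T = S -> v != 0 ->
  S *m v = mu *: v -> (forall w, vdot w (S *m w) <= mu * vdot w w) ->
  lambda_max S = mu.
Proof.
move=> Ssym v0 Sv vmax.
have Emu : [set a : R | eigenvalue S a] mu by apply/sym_eigenvalueP => //; exists v.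
have ub : ubound [set a : R | eigenvalue S a] mu.
  move=> a /= /(sym_eigenvalueP _ Ssym) [z z0 Sz].
  by have := vmax z; rewrite Sz vdotZr ler_pM2r // vdotvv_gt0.
apply/eqP; rewrite eq_le ge_sup ?ub_le_sup //; by exists mu.
Qed.

Lemma lambda_min_eq p (S : 'M[R]_p) mu (v : 'cV[R]_p) : S^T = S -> v != 0 ->
  S *m v = mu *: v -> (forall w, mu * vdot w w <= vdot w (S *m w)) ->
  lambda_min S = mu.
Proof.
move=> Ssym v0 Sv vmin.
have Emu : [set a : R | eigenvalue S a] mu by apply/sym_eigenvalueP => //; exists v.
have lb : lbound [set a : R | eigenvalue S a] mu.
  move=> a /= /(sym_eigenvalueP _ Ssym) [z z0 Sz].
  by have := vmin z; rewrite Sz vdotZr ler_pM2r // vdotvv_gt0.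
apply/eqP; rewrite eq_le ge_inf ?lb_le_inf //; by exists mu.
Qed.

Lemma rayleigh_le_lambda_max p (S : 'M[R]_p) (w : 'cV[R]_p) : (0 < p)%N -> S^T = S ->
  vdot w (S *m w) <= lambda_max S * vdot w w.
Proof.
move=> p0 Ssym; have [mu [v v0 [Sv vmax]]] := sym_eigen_max p0 Ssym.
by rewrite (lambda_max_eq Ssym v0 Sv vmax).
Qed.

Lemma lambda_min_le_rayleigh p (S : 'M[R]_p) (w : 'cV[R]_p) : (0 < p)%N -> S^T = S ->
  lambda_min S * vdot w w <= vdot w (S *m w).
Proof.
move=> p0 Ssym; have [mu [v v0 [Sv vmin]]] := sym_eigen_min p0 Ssym.
by rewrite (lambda_min_eq Ssym v0 Sv vmin).
Qed.

Lemma lambda_min_gt0 p (S : 'M[R]_p) : (0 < p)%N -> S^T = S ->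
  (forall v : 'cV[R]_p, v != 0 -> 0 < (v^T *m S *m v) 0 0) -> 0 < lambda_min S.
Proof.
move=> p0 Ssym Spd; have [mu [v v0 [Sv vmin]]] := sym_eigen_min p0 Ssym.
rewrite (lambda_min_eq Ssym v0 Sv vmin).
have := Spd v v0; rewrite -mulmxA -/(vdot v (S *m v)) Sv vdotZr.
by rewrite pmulr_lgt0 // vdotvv_gt0.
Qed.

Lemma lambda_min_le_max p (S : 'M[R]_p) : (0 < p)%N -> S^T = S ->
  lambda_min S <= lambda_max S.
Proof.
move=> p0 Ssym; have [_ [v v0 _]] := sym_eigen_max p0 Ssym.
rewrite -(ler_pM2r (_ : 0 < vdot v v)) ?vdotvv_gt0 //.
exact: le_trans (lambda_min_le_rayleigh _ p0 Ssym) (rayleigh_le_lambda_max _ p0 Ssym).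
Qed.

Lemma Smax_mx0 p (M : 'M[R]_(p, 0)) : Smax M = 0.
Proof.
rewrite /Smax /lambda_max (_ : [set a | _] = set0) ?sup0 ?sqrtr0 //.
apply/seteqP; split => a //= /eigenvalueP [v _].
by rewrite (_ : v = 0) ?eqxx //; apply/matrixP => i [].
Qed.

Lemma vnorm_mulmx_le p q (M : 'M[R]_(p, q)) (v : 'cV[R]_q) :
  vnorm (M *m v) <= Smax M * vnorm v.
Proof.
case: q M v => [|q] M v.
  rewrite Smax_mx0 mul0r (_ : M *m v = 0) ?vnormE ?vdot0l ?sqrtr0 //.
  by apply/matrixP => i j; rewrite !mxE big_ord0.
have MMsym : (M^T *m M)^T = M^T *m M by rewrite trmx_mul trmxK.
have MvMv : vdot (M *m v) (M *m v) <= vdot v v * lambda_max (M^T *m M).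
  by rewrite vdot_mulmxr mulmxA vdotC mulrC rayleigh_le_lambda_max.
rewrite /Smax !vnormE mulrC -sqrtrM ?vdotvv_ge0 // ler_sqrt //.
exact: le_trans (vdotvv_ge0 _) MvMv.
Qed.

Lemma vdot_mulmx_le p q (M : 'M[R]_(p, q)) (u : 'cV[R]_p) (v : 'cV[R]_q) :
  `|vdot u (M *m v)| <= vnorm u * (Smax M * vnorm v).
Proof.
apply: le_trans (vdot_cauchy_schwarz _ _) _.
by rewrite ler_wpM2l ?vnorm_ge0 // vnorm_mulmx_le.
Qed.

End SymmetricSpectrum.

Section PointwiseDerivatives.
Variable R : realType.
Implicit Types (f g : R -> R) (t a df dg : R).

Lemma is_derive_fD f g t df dg : is_derive t 1 f df -> is_derive t 1 g dg ->
  is_derive t 1 (fun r => f r + g r) (df + dg).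
Proof. exact: is_deriveD. Qed.

Lemma is_derive_fN f t df : is_derive t 1 f df -> is_derive t 1 (fun r => - f r) (- df).
Proof. exact: is_deriveN. Qed.

Lemma is_derive_fM f g t df dg : is_derive t 1 f df -> is_derive t 1 g dg ->
  is_derive t 1 (fun r => f r * g r) (f t * dg + g t * df).
Proof. exact: is_deriveM. Qed.

Lemma is_derive_fZ f t a df : is_derive t 1 f df ->
  is_derive t 1 (fun r => a * f r) (a * df).
Proof.
move=> fd; apply: is_derive_eq (is_derive_fM (is_derive_cst a t 1) fd) _.
by rewrite mulr0 addr0.
Qed.

Lemma is_derive_fsum p (f : 'I_p -> R -> R) t (df : 'I_p -> R) :
  (forall i, is_derive t 1 (f i) (df i)) ->
  is_derive t 1 (fun r => \sum_(i < p) f i r) (\sum_(i < p) df i).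
Proof. by move=> fd; rewrite -fct_sumE; exact: is_derive_sum. Qed.

Lemma is_derive_expR_scale t a : is_derive t 1 (fun r => expR (a * r)) (a * expR (a * t)).
Proof.
apply: is_derive_eq (is_derive1_comp (is_derive_expR _) (is_derive_fZ a (is_derive_id t 1))) _.
by rewrite mulr1 mulrC.
Qed.

Lemma is_derive_sqrt_shift f t df e : is_derive t 1 f df -> 0 < f t + e ->
  is_derive t 1 (fun r => Num.sqrt (f r + e)) (df / (2 * Num.sqrt (f t + e))).
Proof.
move=> fd fe.
have := @is_derive1_comp _ Num.sqrt (fun r => f r + e) t _ _ (is_derive1_sqrt fe)
  (is_derive_fD fd (is_derive_cst e t 1)).
by rewrite addr0 mulrC.
Qed.

End PointwiseDerivatives.

Section WithinContinuity.
Variables (R : realType) (D : set R).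
Implicit Types (f g : R -> R).

Lemma within_continuous_fD f g : {within D, continuous f} -> {within D, continuous g} ->
  {within D, continuous (fun r => f r + g r)}.
Proof. by move=> fc gc x; apply: cvgD; [exact: fc | exact: gc]. Qed.

Lemma within_continuous_fN f :
  {within D, continuous f} -> {within D, continuous (fun r => - f r)}.
Proof. by move=> fc x; apply: cvgN; exact: fc. Qed.

Lemma within_continuous_fM f g : {within D, continuous f} -> {within D, continuous g} ->
  {within D, continuous (fun r => f r * g r)}.
Proof. by move=> fc gc x; apply: cvgM; [exact: fc | exact: gc]. Qed.

Lemma within_continuous_cst (c : R) : {within D, continuous (fun _ : R => c)}.
Proof. by move=> x; exact: cvg_cst. Qed.

Lemma within_continuous_id : {within D, continuous (fun r : R => r)}.
Proof. by apply: continuous_subspaceT => x; exact: cvg_id. Qed.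

Lemma within_continuous_fcomp f (h : R -> R) : {within D, continuous f} -> continuous h ->
  {within D, continuous (fun r => h (f r))}.
Proof.
move=> fc hc x; apply: (@continuous_cvg _ _ _ _ _ f h); first exact: nbhs_subspace_filter.
  exact: hc.
exact: fc.
Qed.

Lemma within_continuous_fsum p (f : 'I_p -> R -> R) :
  (forall i, {within D, continuous (f i)}) ->
  {within D, continuous (fun r => \sum_(i < p) f i r)}.
Proof. by move=> fc x; apply: cvg_sum_ord => i; exact: fc. Qed.

End WithinContinuity.

Section VectorFunctions.
Local Unset Implicit Arguments.
Context {R : realType}.
Implicit Types (p q : nat).

Definition is_derive_cV {p} (f : R -> 'cV[R]_p) (t : R) (df : 'cV[R]_p) :=
  forall i, is_derive t 1 (fun r => f r i 0) (df i 0).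

Definition continuous_cV (D : set R) {p} (f : R -> 'cV[R]_p) :=
  forall i, {within D, continuous (fun r => f r i 0)}.

Lemma is_derive_cV_eq {p} {f : R -> 'cV[R]_p} {t df} df' :
  is_derive_cV f t df -> df = df' -> is_derive_cV f t df'.
Proof. by move=> fd <-. Qed.

Lemma is_derive_cVD {p} {f g : R -> 'cV[R]_p} {t df dg} :
  is_derive_cV f t df -> is_derive_cV g t dg -> is_derive_cV (fun r => f r + g r) t (df + dg).
Proof.
move=> fd gd i; rewrite mxE (_ : (fun r => _) = fun r => f r i 0 + g r i 0).
  exact: is_derive_fD.
by apply/funext => r; rewrite mxE.
Qed.

Lemma is_derive_cVN {p} {f : R -> 'cV[R]_p} {t df} :
  is_derive_cV f t df -> is_derive_cV (fun r => - f r) t (- df).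
Proof.
move=> fd i; rewrite mxE (_ : (fun r => _) = fun r => - f r i 0).
  exact: is_derive_fN.
by apply/funext => r; rewrite mxE.
Qed.

Lemma is_derive_cVB {p} {f g : R -> 'cV[R]_p} {t df dg} :
  is_derive_cV f t df -> is_derive_cV g t dg -> is_derive_cV (fun r => f r - g r) t (df - dg).
Proof. by move=> fd gd; apply: is_derive_cVD fd (is_derive_cVN gd). Qed.

Lemma is_derive_cV_cst {p} (c : 'cV[R]_p) t : is_derive_cV (fun _ => c) t 0.
Proof. by move=> i; rewrite mxE; exact: is_derive_cst. Qed.

Lemma is_derive_cV_mulmx {p q} (M : 'M[R]_(q, p)) {f : R -> 'cV[R]_p} {t df} :
  is_derive_cV f t df -> is_derive_cV (fun r => M *m f r) t (M *m df).
Proof.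
move=> fd i; rewrite mxE (_ : (fun r => _) = fun r => \sum_j M i j * f r j 0).
  by apply: is_derive_fsum => j; exact: is_derive_fZ.
by apply/funext => r; rewrite mxE.
Qed.

Lemma is_derive_vdot {p} {f g : R -> 'cV[R]_p} {t df dg} :
  is_derive_cV f t df -> is_derive_cV g t dg ->
  is_derive t 1 (fun r => vdot (f r) (g r)) (vdot df (g t) + vdot (f t) dg).
Proof.
move=> fd gd; rewrite (_ : (fun r => _) = fun r => \sum_i f r i 0 * g r i 0).
  rewrite !vdotE -big_split; apply: is_derive_fsum => i.
  by apply: is_derive_eq (is_derive_fM (fd i) (gd i)) _; rewrite addrC mulrC.
by apply/funext => r; rewrite vdotE.
Qed.

Lemma is_derive_quad_form {p} {S : 'M[R]_p} {f : R -> 'cV[R]_p} {t df} : S^T = S ->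
  is_derive_cV f t df ->
  is_derive t 1 (fun r => vdot (f r) (S *m f r)) (2 * vdot (f t) (S *m df)).
Proof.
move=> Ssym fd; apply: is_derive_eq (is_derive_vdot fd (is_derive_cV_mulmx S fd)) _.
by rewrite vdot_mulmxr Ssym vdotC mulr2n mulrDl mul1r.
Qed.

Section Within.
Context {D : set R}.

Lemma continuous_cV_subset {D' : set R} {p} {f : R -> 'cV[R]_p} :
  D' `<=` D -> continuous_cV D f -> continuous_cV D' f.
Proof. by move=> D'D fc i; exact: continuous_subspaceW D'D (fc i). Qed.

Lemma continuous_cVD {p} {f g : R -> 'cV[R]_p} :
  continuous_cV D f -> continuous_cV D g -> continuous_cV D (fun r => f r + g r).
Proof.
move=> fc gc i; rewrite (_ : (fun r => _) = fun r => f r i 0 + g r i 0).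
  exact: within_continuous_fD.
by apply/funext => r; rewrite mxE.
Qed.

Lemma continuous_cVN {p} {f : R -> 'cV[R]_p} :
  continuous_cV D f -> continuous_cV D (fun r => - f r).
Proof.
move=> fc i; rewrite (_ : (fun r => _) = fun r => - f r i 0).
  exact: within_continuous_fN.
by apply/funext => r; rewrite mxE.
Qed.

Lemma continuous_cVB {p} {f g : R -> 'cV[R]_p} :
  continuous_cV D f -> continuous_cV D g -> continuous_cV D (fun r => f r - g r).
Proof. by move=> fc gc; apply: continuous_cVD fc (continuous_cVN gc). Qed.

Lemma continuous_cV_cst {p} (c : 'cV[R]_p) : continuous_cV D (fun _ => c).
Proof. by move=> i; exact: within_continuous_cst. Qed.

Lemma continuous_cV_mulmx {p q} (M : 'M[R]_(q, p)) {f : R -> 'cV[R]_p} :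
  continuous_cV D f -> continuous_cV D (fun r => M *m f r).
Proof.
move=> fc i; rewrite (_ : (fun r => _) = fun r => \sum_j M i j * f r j 0).
  by apply: within_continuous_fsum => j; apply: within_continuous_fM (fc j);
    exact: within_continuous_cst.
by apply/funext => r; rewrite mxE.
Qed.

Lemma within_continuous_vdot {p} {f g : R -> 'cV[R]_p} :
  continuous_cV D f -> continuous_cV D g -> {within D, continuous (fun r => vdot (f r) (g r))}.
Proof.
move=> fc gc; rewrite (_ : (fun r => _) = fun r => \sum_i f r i 0 * g r i 0).
  by apply: within_continuous_fsum => i; exact: within_continuous_fM.
by apply/funext => r; rewrite vdotE.
Qed.

End Within.
End VectorFunctions.

Section DifferentialInequalities.
Variable R : realType.

Lemma le_of_forall_eps (x y c : R) : 0 <= c ->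
  (forall e, 0 < e -> x <= y + e * c) -> x <= y.
Proof.
move=> c0 xy; apply/ler_addgt0Pr => e e0.
have c1 : 0 < c + 1 by lra.
apply: le_trans (xy (e / (c + 1)) (divr_gt0 e0 c1)) _.
by rewrite lerD2l mulrAC ler_pdivrMr //; nra.
Qed.

Lemma ler0_is_derive_le (h : R -> R) (a b : R) : a <= b ->
  (forall x, a < x < b -> exists2 dh, is_derive x 1 h dh & dh <= 0) ->
  {within `[a, b], continuous h} -> forall t, a <= t <= b -> h t <= h a.
Proof.
move=> ab hd hc t /andP[a_le_t t_le_b].
apply: (@ler0_derive1_le_cc _ h a b) => //.
- by move=> x; rewrite in_itv /= => /hd [dh dhx _]; exact: ex_derive.
- move=> x; rewrite in_itv /= => /hd [dh dhx dh0].
  by rewrite derive1E (@derive_val _ _ _ _ _ _ _ dhx).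
all: by rewrite in_itv /= ?lexx ?ab ?a_le_t ?t_le_b.
Qed.

(* Grönwall's lemma, stated with the integrating factor so that it can be
   chained over consecutive intervals. *)
Lemma gronwall_affine (f : R -> R) (c K a b : R) : c != 0 -> a <= b ->
  {within `[a, b], continuous f} ->
  (forall x, a < x < b -> exists2 df, is_derive x 1 f df & df <= c * f x + K) ->
  forall t, a <= t <= b ->
  (f t + K / c) * expR (- c * t) <= (f a + K / c) * expR (- c * a).
Proof.
move=> c0 ab fc fd; apply: ler0_is_derive_le => // [x /fd [df dfx dfle]|].
  have hd := is_derive_fM (is_derive_fD dfx (is_derive_cst (K / c) x 1))
    (is_derive_expR_scale x (- c)).
  exists (expR (- c * x) * (df - (c * f x + K))); last first.
    by rewrite pmulr_rle0 ?expR_gt0 // subr_le0.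
  by apply: is_derive_eq hd _; rewrite /cst; field.
apply: within_continuous_fM.
  by apply: within_continuous_fD fc _; exact: within_continuous_cst.
apply: within_continuous_fcomp; last exact: continuous_expR.
by apply: within_continuous_fM; [exact: within_continuous_cst | exact: within_continuous_id].
Qed.

(* [sqrt (|z|^2 + eta^2)] is used instead of [|z|] to stay differentiable. *)
Lemma linear_ode_growth p (M : 'M[R]_p) (z w : R -> 'cV[R]_p) (a b kap : R) :
  0 < Smax M -> 0 <= kap -> continuous_cV [set r | a <= r < b] z ->
  (forall t, a < t < b -> is_derive_cV z t (M *m z t + w t)) ->
  (forall t, a < t < b -> vnorm (w t) <= kap) -> z a = 0 ->
  forall t, a <= t < b ->
    vnorm (z t) <= kap / Smax M * (expR (Smax M * (t - a)) - 1).
Proof.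
move=> S0 kap0 zc zd wle za t /andP[a_le_t t_lt_b].
set S := Smax M in S0 *; set E := expR (S * (t - a)).
have E1 : 1 <= E by rewrite -expR0 ler_expR mulr_ge0 ?subr_ge0 // ltW.
apply: (le_of_forall_eps (c := E)) => [|eta eta0]; first lra.
pose zeta r := Num.sqrt (vdot (z r) (z r) + eta ^+ 2).
have zeta_gt0 r : 0 < vdot (z r) (z r) + eta ^+ 2.
  by rewrite ltr_wpDl ?vdotvv_ge0 // exprn_gt0.
have norm_le_zeta r : vnorm (z r) <= zeta r.
  by rewrite vnormE ler_sqrt ?lerDl ?sqr_ge0 // ltW.
have zeta_deriv x : a < x < t ->
    exists2 dz, is_derive x 1 zeta dz & dz <= S * zeta x + kap.
  move=> /andP[ax xt]; have xab : a < x < b by rewrite ax (lt_trans xt t_lt_b).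
  have zd' := zd x xab; have := is_derive_sqrt_shift (is_derive_vdot zd' zd') (zeta_gt0 x).
  rewrite (vdotC (M *m z x + w x)) -/(zeta x) => zetad; eexists; first exact: zetad.
  have zeta0 : 0 < zeta x by rewrite sqrtr_gt0.
  rewrite ler_pdivrMr ?mulr_gt0 // vdotDr.
  have zMz := le_trans (ler_norm _) (vdot_mulmx_le M (z x) (z x)); rewrite -/S in zMz.
  have zw := le_trans (ler_norm _) (vdot_cauchy_schwarz (z x) (w x)).
  have := wle x xab; have := norm_le_zeta x; have := vnorm_ge0 (z x); rewrite -/S.
  move: zMz zw; set nz := vnorm (z x); set zx := zeta x => zMz zw nz0 nzz wk.
  have : nz * vnorm (w x) <= zx * kap by rewrite ler_pM // vnorm_ge0.
  have : nz * (S * nz) <= zx * (S * zx) by rewrite ler_pM ?mulr_ge0 ?ler_wpM2l // ltW.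
  nra.
have zeta_cont : {within `[a, t], continuous zeta}.
  have zc' : continuous_cV `[a, t] z.
    apply: continuous_cV_subset zc => r /=; rewrite in_itv /= => /andP[ar rt].
    by rewrite ar (le_lt_trans rt t_lt_b).
  apply: within_continuous_fcomp; last exact: sqrt_continuous.
  apply: within_continuous_fD (within_continuous_vdot zc' zc') _.
  exact: within_continuous_cst.
have := gronwall_affine (lt0r_neq0 S0) a_le_t zeta_cont zeta_deriv (t := t).
rewrite lexx a_le_t /= /zeta za vdot0l add0r sqrtr_sqr gtr0_norm // -/(zeta t).
have := norm_le_zeta t.
have EN : expR (- S * a) = E * expR (- S * t) by rewrite /E -expRD; congr expR; ring.
rewrite EN mulrA ler_pM2r ?expR_gt0 // => nz ze.
by rewrite -mulrA; lra.
Qed.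

End DifferentialInequalities.

Section ServicingInstants.
Variables (R : realType) (ts : nat -> R).
Hypotheses (ts0 : ts 0%N = 0) (ts_lt : forall s, ts s < ts s.+1)
  (ts_unbounded : forall M : R, exists N : nat, forall s, (N <= s)%N -> M <= ts s).

Lemma instant_ge0 s : 0 <= ts s.
Proof. by elim: s => [|s IH]; [rewrite ts0 | exact: le_trans IH (ltW (ts_lt s))]. Qed.

Lemma instant_interval t : 0 <= t -> exists s, ts s <= t < ts s.+1.
Proof.
move=> t0; have [N tsN] := ts_unbounded (t + 1).
have : t < ts N by apply: lt_le_trans (tsN N (leqnn N)); lra.
elim: N {tsN} => [|N IH]; first by rewrite ts0 => /lt_le_trans /(_ t0); rewrite ltxx.
by move=> tN; have [/IH //|Nt] := ltP t (ts N); exists N; rewrite Nt tN.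
Qed.

Lemma le_at0_of_nonincr_between_instants (g : R -> R) :
  (forall s t, ts s <= t <= ts s.+1 -> g t <= g (ts s)) ->
  forall t, 0 <= t -> g t <= g 0.
Proof.
move=> g_nonincr t t0; have [N tsN] := ts_unbounded t.
move: (tsN N (leqnn N)) => {tsN}; elim: N t t0 => [|N IH] t t0 tN.
  by rewrite (_ : t = 0) //; apply/eqP; rewrite eq_le t0 -ts0 tN.
have [/(IH _ t0) //|Nt] := leP t (ts N).
apply: le_trans (g_nonincr N t _) (IH _ (instant_ge0 N) (lexx _)).
by rewrite (ltW Nt) tN.
Qed.

End ServicingInstants.

Section ClosedLoopInequalities.
Variable R : realType.

Lemma dwell_time_growth_le (S kap VT h tau : R) : 0 < S -> 0 <= kap -> 0 < VT ->
  0 <= tau <= h -> (0 < kap -> h <= S^-1 * ln (VT * S / kap + 1)) ->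
  kap / S * (expR (S * tau) - 1) <= VT.
Proof.
move=> S0 kap0 VT0 /andP[tau0 tauh] hle.
have [->|kap_gt0] := eqVneq kap 0; first by rewrite !mul0r ltW.
have {}kap_gt0 : 0 < kap by rewrite lt_def kap_gt0.
have arg0 : 0 < VT * S / kap + 1 by rewrite ltr_wpDl // divr_ge0 ?mulr_ge0 // ltW.
have : expR (S * tau) <= VT * S / kap + 1.
  rewrite -(lnK arg0) ler_expR (le_trans (ler_wpM2l (ltW S0) tauh)) //.
  by rewrite -ler_pdivlMl // hle.
rewrite -lerBlDr -(ler_pM2l (divr_gt0 kap_gt0 S0)) => /le_trans; apply.
by rewrite le_eqVlt; apply/orP; left; apply/eqP; field; rewrite !gt_eqF.
Qed.

Lemma riccati_dissipation p q (A P : 'M[R]_p) (B : 'M[R]_(p, q)) (k : R)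
    (e dl xg dd : 'cV[R]_p) :
  P^T = P -> A^T *m P + P *m A - 2 *: (P *m B *m B^T *m P) + k%:M = 0 ->
  2 * vdot e (P *m (- (A *m (xg - e) + B *m (B^T *m P *m (e + dl)) + dd))) =
  - k * vdot e e - 2 * vdot e ((P *m B *m B^T *m P) *m dl)
  - 2 * vdot e ((P *m A) *m xg) - 2 * vdot e (P *m dd).
Proof.
move=> Psym ric.
have PA_sym : vdot e ((P *m A) *m e) = vdot e ((A^T *m P) *m e).
  by rewrite vdot_mulmxr trmx_mul Psym vdotC.
have ric' : A^T *m P + P *m A = 2 *: (P *m B *m B^T *m P) - k%:M.
  apply/matrixP => i j; have := congr1 (fun M : 'M[R]_p => M i j) ric.
  by rewrite !mxE => h; lra.
have quad : vdot e ((A^T *m P) *m e) + vdot e ((P *m A) *m e) =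
    2 * vdot e ((P *m B *m B^T *m P) *m e) - k * vdot e e.
  by rewrite -vdotDr -mulmxDl ric' mulmxBl -scalemxAl mul_scalar_mx vdotBr !vdotZr.
rewrite !(mulmxN, mulmxDr, mulmxBr, vdotNr, vdotDr, vdotBr) !mulmxA.
by rewrite -!mulmxA; rewrite -!mulmxA in PA_sym quad; lra.
Qed.

Lemma oppr_vdot_mulmx_le p q (M : 'M[R]_(p, q)) (e : 'cV[R]_p) (v : 'cV[R]_q) (c : R) :
  vnorm v <= c -> - vdot e (M *m v) <= vnorm e * (Smax M * c).
Proof.
move=> vc; apply: le_trans (_ : `|vdot e (M *m v)| <= _); first by rewrite -normrN ler_norm.
apply: le_trans (vdot_mulmx_le _ _ _) _.
by rewrite ler_wpM2l ?vnorm_ge0 // ler_wpM2l // sqrtr_ge0.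
Qed.

Lemma riccati_dissipation_le p q (A P : 'M[R]_p) (B : 'M[R]_(p, q))
    (k VT xgbar dbar : R) (e dl xg dd : 'cV[R]_p) :
  P^T = P -> A^T *m P + P *m A - 2 *: (P *m B *m B^T *m P) + k%:M = 0 ->
  vnorm dl <= VT -> vnorm xg <= xgbar -> vnorm dd <= dbar ->
  2 * vdot e (P *m (- (A *m (xg - e) + B *m (B^T *m P *m (e + dl)) + dd))) <=
  - k * vnorm e ^+ 2 + (2 * dbar * Smax P + 2 * VT * Smax (P *m B *m B^T *m P)
             + 2 * Smax (P *m A) * xgbar) * vnorm e.
Proof.
move=> Psym ric dlVT xgb ddb; rewrite (riccati_dissipation _ _ _ _ Psym ric) vnorm_sqr.
have := oppr_vdot_mulmx_le (P *m B *m B^T *m P) e dlVT.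
have := oppr_vdot_mulmx_le (P *m A) e xgb.
have := oppr_vdot_mulmx_le P e ddb.
nra.
Qed.

(* With [W = sqrt (V + eta^2)] and [lm |e|^2 <= V <= lM |e|^2], the bound
   [V' <= -k |e|^2 + rho |e|] becomes [W' <= -c W + K]. *)
Lemma sqrt_lyapunov_deriv_le (k lM L rho eta a V dV : R) :
  0 < k -> 0 < lM -> 0 < L -> 0 <= rho -> 0 < eta -> 0 <= a ->
  L ^+ 2 * a ^+ 2 <= V -> V <= lM * a ^+ 2 -> dV <= - k * a ^+ 2 + rho * a ->
  dV / (2 * Num.sqrt (V + eta ^+ 2)) <=
    - (k / (2 * lM)) * Num.sqrt (V + eta ^+ 2) + (rho / (2 * L) + k / (2 * lM) * eta).
Proof.
move=> k0 lM0 L0 rho0 eta0 a0 LV VlM dVle.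
have V0 : 0 <= V by apply: le_trans LV; rewrite mulr_ge0 ?sqr_ge0.
set W := Num.sqrt _.
have W0 : 0 < W by rewrite sqrtr_gt0 ltr_wpDl ?exprn_gt0.
have W2 : W ^+ 2 = V + eta ^+ 2 by rewrite sqr_sqrtr // addr_ge0 ?sqr_ge0.
have etaW : eta <= W.
  by rewrite -(ger0_norm (ltW eta0)) -sqrtr_sqr ler_sqrt ?lerDr // addr_ge0 ?sqr_ge0.
have aLW : a * L <= W.
  rewrite -(ger0_norm (mulr_ge0 a0 (ltW L0))) -sqrtr_sqr ler_sqrt ?addr_ge0 ?sqr_ge0 //.
  by rewrite exprMn mulrC (le_trans LV) // lerDl sqr_ge0.
set c := k / (2 * lM); have c0 : 0 < c by rewrite divr_gt0 // mulr_gt0.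
set K := rho / (2 * L).
have cV_le : 2 * c * V <= k * a ^+ 2.
  rewrite (_ : 2 * c = k / lM); last by rewrite /c; field; rewrite gt_eqF.
  by rewrite mulrAC ler_pdivrMr //; nra.
have rho_a_le : rho * a <= 2 * K * W.
  rewrite (_ : 2 * K = rho / L); last by rewrite /K; field; rewrite gt_eqF.
  by rewrite -mulrA ler_wpM2l // ler_pdivlMl // mulrC.
have eta2_le : c * eta ^+ 2 <= c * eta * W.
  by rewrite expr2 mulrA ler_wpM2l // mulr_ge0 // ltW.
have cW2E : c * W ^+ 2 = c * V + c * eta ^+ 2 by rewrite W2 mulrDr.
rewrite ler_pdivrMr ?mulr_gt0 //; nra.
Qed.

(* Unwinds the integrating factor of Grönwall's lemma and trades
   [W = sqrt (V + eta^2)] back for the norm of the error. *)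
Lemma lyapunov_error_bound (k lM lm rho eta t a a0 Vt V0 : R) :
  0 < k -> 0 < lm -> lm <= lM -> 0 <= rho -> 0 < eta -> 0 <= t -> 0 <= a -> 0 <= a0 ->
  lm * a ^+ 2 <= Vt -> V0 <= lM * a0 ^+ 2 -> 0 <= V0 ->
  let c := k / (2 * lM) in let Kc := (rho / (2 * Num.sqrt lm) + c * eta) / c in
  (Num.sqrt (Vt + eta ^+ 2) - Kc) * expR (c * t) <= Num.sqrt (V0 + eta ^+ 2) - Kc ->
  a <= lM * rho / (lm * k) * (1 - expR (- c * t))
       + Num.sqrt (lM / lm) * a0 * expR (- c * t) + eta * (Num.sqrt lm)^-1.
Proof.
move=> k0 lm0 lmM rho0 eta0 t0 a_ge0 a0_ge0 lmVt V0lM V0_ge0 c Kc.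
have lM0 : 0 < lM by exact: lt_le_trans lmM.
set L := Num.sqrt lm; have L0 : 0 < L by rewrite sqrtr_gt0.
have LL : L ^+ 2 = lm by rewrite sqr_sqrtr // ltW.
have c0 : 0 < c by rewrite divr_gt0 // mulr_gt0.
set F := expR (- c * t); have F0 : 0 < F by exact: expR_gt0.
have F1 : F <= 1 by rewrite /F expR_le1 mulNr oppr_le0 mulr_ge0 // ltW.
have EF : expR (c * t) * F = 1 by rewrite /F -expRD mulNr addrN expR0.
have KcE : Kc = lM * rho / (lm * k) * L + eta.
  by rewrite /Kc /c -/L -LL; field; rewrite !gt_eqF // ?mulr_gt0 // ?exprn_gt0.
set Wt := Num.sqrt (Vt + _); set W0 := Num.sqrt (V0 + _) => decay.
have WtF : Wt <= Kc + (W0 - Kc) * F.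
  by have := ler_wpM2r (ltW F0) decay; rewrite -mulrA EF mulr1; nra.
have LaWt : L * a <= Wt.
  rewrite -(ger0_norm (mulr_ge0 (ltW L0) a_ge0)) -sqrtr_sqr ler_sqrt.
    by rewrite exprMn LL (le_trans lmVt) // lerDl sqr_ge0.
  by rewrite addr_ge0 ?sqr_ge0 // (le_trans _ lmVt) // mulr_ge0 ?sqr_ge0 // ltW.
have W0le : W0 <= Num.sqrt lM * a0 + eta.
  have rhs_ge0 : 0 <= Num.sqrt lM * a0 + eta by rewrite addr_ge0 ?mulr_ge0 ?sqrtr_ge0 // ltW.
  rewrite -(ger0_norm rhs_ge0) -sqrtr_sqr ler_sqrt ?sqr_ge0 // sqrrD exprMn sqr_sqrtr ?(ltW lM0) //.
  have : 0 <= Num.sqrt lM * a0 * eta by rewrite !mulr_ge0 ?sqrtr_ge0 // ltW.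
  lra.
rewrite (sqrtrM _ (ltW lM0)) sqrtrV ?(ltW lm0) // -/L -(ler_pM2l L0).
have -> : L * (lM * rho / (lm * k) * (1 - F) + Num.sqrt lM / L * a0 * F + eta * L^-1) =
    (lM * rho / (lm * k) * L) * (1 - F) + Num.sqrt lM * a0 * F + eta.
  by field; rewrite !gt_eqF.
by rewrite KcE in WtF; nra.
Qed.

End ClosedLoopInequalities.

Section ClosedLoop.
Local Unset Implicit Arguments.
Variables (R : realType) (m n : nat).
Variables (A : 'M[R]_m) (B : 'M[R]_(m, n)) (P : 'M[R]_m) (k : R).
Variables (xg : 'cV[R]_m) (xgbar dbar VT : R).
Variables (d x xh : R -> 'cV[R]_m) (u : R -> 'cV[R]_n) (ts : nat -> R).
Hypotheses (m_gt0 : (0 < m)%N) (SA_gt0 : 0 < Smax A) (k_gt0 : 0 < k).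
Hypotheses (P_sym : P^T = P)
  (P_pd : forall v : 'cV[R]_m, v != 0 -> 0 < (v^T *m P *m v) 0 0)
  (riccati : A^T *m P + P *m A - 2 *: (P *m B *m B^T *m P) + k%:M = 0).
Hypotheses (xg_le : vnorm xg <= xgbar) (d_le : forall t, 0 <= t -> vnorm (d t) <= dbar).
Hypotheses (ts0 : ts 0%N = 0) (ts_lt : forall s, ts s < ts s.+1)
  (ts_unbounded : forall M : R, exists N : nat, forall s, (N <= s)%N -> M <= ts s).
Hypothesis u_def : forall t, 0 <= t -> u t = B^T *m P *m (xg - xh t).
Hypotheses (x_cont : continuous_cV [set t | 0 <= t] x)
  (x_deriv : forall s t, ts s < t < ts s.+1 -> is_derive_cV x t (A *m x t + B *m u t + d t)).
Hypotheses (xh_cont : forall s, continuous_cV [set t | ts s <= t < ts s.+1] xh)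
  (xh_deriv : forall s t, ts s < t < ts s.+1 ->
     is_derive_cV xh t (- (A *m (xg - xh t)) + B *m u t))
  (xh_reset : forall s, xh (ts s) = x (ts s)).
Hypotheses (VT_gt0 : 0 < VT) (dwell : forall s, 0 < Smax A * xgbar + dbar ->
  ts s.+1 - ts s <= (Smax A)^-1 * ln (VT * Smax A / (Smax A * xgbar + dbar) + 1)).

Let rho := 2 * dbar * Smax P + 2 * VT * Smax (P *m B *m B^T *m P)
  + 2 * Smax (P *m A) * xgbar.

Let e r := xg - x r.

Let ts_ge0 := instant_ge0 ts0 ts_lt.

Lemma xg_bound_ge0 : 0 <= xgbar. Proof. exact: le_trans (vnorm_ge0 _) xg_le. Qed.

Lemma d_bound_ge0 : 0 <= dbar. Proof. exact: le_trans (vnorm_ge0 _) (d_le 0 (lexx 0)). Qed.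

Lemma rho_ge0 : 0 <= rho.
Proof. by rewrite !addr_ge0 ?mulr_ge0 ?sqrtr_ge0 ?xg_bound_ge0 ?d_bound_ge0 // ltW. Qed.

Lemma estimation_gap_le s t : ts s <= t < ts s.+1 -> vnorm (x t - xh t) <= VT.
Proof.
move=> st; set S := Smax A; set kap := S * xgbar + dbar.
have kap0 : 0 <= kap by rewrite addr_ge0 ?mulr_ge0 ?xg_bound_ge0 ?d_bound_ge0 // ltW.
have gap_cont : continuous_cV [set r | ts s <= r < ts s.+1] (fun r => x r - xh r).
  have sub : [set r | ts s <= r < ts s.+1] `<=` [set r | 0 <= r].
    by move=> r /andP[sr _]; exact: le_trans (ts_ge0 s) sr.
  exact: continuous_cVB (continuous_cV_subset sub x_cont) (xh_cont s).
have gap_deriv r : ts s < r < ts s.+1 ->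
    is_derive_cV (fun r => x r - xh r) r (A *m (x r - xh r) + (A *m xg + d r)).
  move=> sr; apply: is_derive_cV_eq (is_derive_cVB (x_deriv s r sr) (xh_deriv s r sr)) _.
  by rewrite !mulmxBr; apply/matrixP => i j; rewrite !mxE; lra.
have forcing_le r : ts s < r < ts s.+1 -> vnorm (A *m xg + d r) <= kap.
  move=> /andP[sr _]; apply: le_trans (ler_vnormD _ _) _.
  have := vnorm_mulmx_le A xg; have := d_le r (le_trans (ts_ge0 s) (ltW sr)).
  have : S * vnorm xg <= S * xgbar by rewrite ler_wpM2l // ltW.
  by rewrite /kap -/S; lra.
have gap0 : x (ts s) - xh (ts s) = 0 by rewrite xh_reset subrr.
apply: le_trans (linear_ode_growth SA_gt0 kap0 gap_cont gap_deriv forcing_le gap0 st) _.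
case/andP: st => st1 st2.
apply: (dwell_time_growth_le (h := ts s.+1 - ts s)) => //; last exact: dwell s.
by rewrite subr_ge0 st1 lerD2r ltW.
Qed.

Lemma tracking_error_deriv s t : ts s < t < ts s.+1 ->
  is_derive_cV e t (- (A *m (xg - e t) + B *m (B^T *m P *m (e t + (x t - xh t))) + d t)).
Proof.
move=> st; apply: is_derive_cV_eq (is_derive_cVB (is_derive_cV_cst xg t) (x_deriv s t st)) _.
have t0 : 0 <= t by case/andP: st => st _; exact: le_trans (ts_ge0 s) (ltW st).
by rewrite u_def // /e sub0r subKr addrA subrK.
Qed.

Let V r := vdot (e r) (P *m e r).

Lemma lyapunov_deriv_le s t : ts s < t < ts s.+1 ->
  exists2 dV, is_derive t 1 V dV & dV <= - k * vnorm (e t) ^+ 2 + rho * vnorm (e t).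
Proof.
move=> st; eexists; first exact: is_derive_quad_form P_sym (tracking_error_deriv s t st).
have t0 : 0 <= t by case/andP: st => st _; exact: le_trans (ts_ge0 s) (ltW st).
have st' : ts s <= t < ts s.+1 by case/andP: st => st1 ->; rewrite ltW.
exact: riccati_dissipation_le P_sym riccati (estimation_gap_le s t st') xg_le (d_le t t0).
Qed.

Let lM := lambda_max P.
Let lm := lambda_min P.
Let c := k / (2 * lM).
Let K eta := rho / (2 * Num.sqrt lm) + c * eta.
Let W eta r := Num.sqrt (V r + eta ^+ 2).

Lemma lm_gt0 : 0 < lm. Proof. exact: lambda_min_gt0. Qed.

Lemma lm_le_lM : lm <= lM. Proof. exact: lambda_min_le_max. Qed.

Lemma V_bounds r : lm * vnorm (e r) ^+ 2 <= V r <= lM * vnorm (e r) ^+ 2.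
Proof. by rewrite vnorm_sqr lambda_min_le_rayleigh // rayleigh_le_lambda_max. Qed.

Lemma sqrt_lyapunov_deriv eta s t : 0 < eta -> ts s < t < ts s.+1 ->
  exists2 dW, is_derive t 1 (W eta) dW & dW <= - c * W eta t + K eta.
Proof.
move=> eta0 st; have [dV dVt dVle] := lyapunov_deriv_le s t st.
have /andP[lmV VlM] := V_bounds t.
have V_eta_gt0 : 0 < V t + eta ^+ 2.
  by rewrite ltr_wpDl ?exprn_gt0 // (le_trans _ lmV) // mulr_ge0 ?sqr_ge0 ?(ltW lm_gt0).
eexists; first exact: is_derive_sqrt_shift dVt V_eta_gt0.
have L0 : 0 < Num.sqrt lm by rewrite sqrtr_gt0 lm_gt0.
apply: (sqrt_lyapunov_deriv_le (a := vnorm (e t))) => //.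
- exact: lt_le_trans lm_gt0 lm_le_lM.
- exact: rho_ge0.
- exact: vnorm_ge0.
- by rewrite sqr_sqrtr // ltW // lm_gt0.
Qed.

Lemma lyapunov_decay eta t : 0 < eta -> 0 <= t ->
  (W eta t - K eta / c) * expR (c * t) <= W eta 0 - K eta / c.
Proof.
move=> eta0 t0; have c0 : 0 < c.
  by rewrite divr_gt0 // mulr_gt0 // (lt_le_trans lm_gt0 lm_le_lM).
have := le_at0_of_nonincr_between_instants ts0 ts_lt ts_unbounded
  (g := fun r => (W eta r - K eta / c) * expR (c * r)) _ t0.
rewrite mulr0 expR0 mulr1; apply => s r sr.
have e_cont : continuous_cV `[ts s, ts s.+1] e.
  have sub : `[ts s, ts s.+1] `<=` [set r | 0 <= r].
    by move=> y /=; rewrite in_itv /= => /andP[sy _]; exact: le_trans (ts_ge0 s) sy.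
  exact: continuous_cVB (continuous_cV_cst xg) (continuous_cV_subset sub x_cont).
have W_cont : {within `[ts s, ts s.+1], continuous W eta}.
  apply: within_continuous_fcomp; last exact: sqrt_continuous.
  apply: within_continuous_fD; last exact: within_continuous_cst.
  exact: within_continuous_vdot e_cont (continuous_cV_mulmx P e_cont).
have nc0 : - c != 0 by rewrite oppr_eq0 gt_eqF.
have := gronwall_affine nc0 (ltW (ts_lt s)) W_cont
  (fun y sy => sqrt_lyapunov_deriv eta s y eta0 sy) sr.
by rewrite invrN mulrN opprK.
Qed.

Lemma tracking_error_le t : 0 <= t ->
  vnorm (xg - x t) <=
    lM * rho / (lm * k) * (1 - expR (- c * t))
    + Num.sqrt (lM / lm) * vnorm (xg - x 0) * expR (- c * t).
Proof.
move=> t0; apply: (le_of_forall_eps (c := (Num.sqrt lm)^-1)) => [|eta eta0].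
  by rewrite invr_ge0 sqrtr_ge0.
have /andP[lmVt _] := V_bounds t; have /andP[_ V0lM] := V_bounds 0.
have V0_ge0 : 0 <= V 0.
  by rewrite (le_trans _ (proj1 (andP (V_bounds 0)))) // mulr_ge0 ?sqr_ge0 ?(ltW lm_gt0).
exact: lyapunov_error_bound k_gt0 lm_gt0 lm_le_lM rho_ge0 eta0 t0 (vnorm_ge0 _)
  (vnorm_ge0 _) lmVt V0lM V0_ge0 (lyapunov_decay eta t eta0 t0).
Qed.

Lemma closed_loop_bounded : exists M : R, forall t, 0 <= t ->
  [/\ vnorm (xg - x t) <= M, vnorm (xg - xh t) <= M & vnorm (u t) <= M].
Proof.
have lM0 : 0 < lM := lt_le_trans lm_gt0 lm_le_lM.
set Me := lM * rho / (lm * k) + Num.sqrt (lM / lm) * vnorm (xg - x 0).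
have Me1 : 0 <= lM * rho / (lm * k).
  by rewrite divr_ge0 ?mulr_ge0 ?rho_ge0 // ltW // lm_gt0.
have Me2 : 0 <= Num.sqrt (lM / lm) * vnorm (xg - x 0).
  by rewrite mulr_ge0 ?sqrtr_ge0 ?vnorm_ge0.
have Me0 : 0 <= Me by rewrite addr_ge0.
have e_le t : 0 <= t -> vnorm (xg - x t) <= Me.
  move=> t0; apply: le_trans (tracking_error_le t t0) _.
  have F0 : 0 < expR (- c * t) := expR_gt0 _.
  have F1 : expR (- c * t) <= 1.
    by rewrite expR_le1 mulNr oppr_le0 mulr_ge0 // divr_ge0 ?mulr_ge0 // ltW.
  by rewrite /Me; nra.
have eh_le t : 0 <= t -> vnorm (xg - xh t) <= Me + VT.
  move=> t0; have [s st] := instant_interval ts0 ts_unbounded t0.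
  rewrite (_ : xg - xh t = (xg - x t) + (x t - xh t)); last by rewrite addrA subrK.
  by apply: le_trans (ler_vnormD _ _) (lerD (e_le t t0) (estimation_gap_le s t st)).
set Mu := Smax (B^T *m P) * (Me + VT).
have Mu0 : 0 <= Mu by rewrite mulr_ge0 ?sqrtr_ge0 // addr_ge0 ?addr_ge0 // ltW.
exists (Me + VT + Mu) => t t0; have Me_VT := eh_le t t0.
have u_le : vnorm (u t) <= Mu.
  by rewrite u_def //; apply: le_trans (vnorm_mulmx_le _ _) _; rewrite ler_wpM2l ?sqrtr_ge0.
split.
- by apply: le_trans (e_le t t0) _; rewrite -addrA lerDl addr_ge0 // ltW.
- by apply: le_trans Me_VT _; rewrite lerDl.
- by apply: le_trans u_le _; rewrite lerDr addr_ge0 // ltW.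
Qed.

Lemma closed_loop_guarantees :
  (forall t, 0 <= t ->
     vnorm (xg - x t) <=
       lM * rho / (lm * k) * (1 - expR (- c * t))
       + Num.sqrt (lM / lm) * vnorm (xg - x 0) * expR (- c * t))
  /\ (exists M : R, forall t, 0 <= t ->
        [/\ vnorm (xg - x t) <= M, vnorm (xg - xh t) <= M & vnorm (u t) <= M]).
Proof. by split; [exact: tracking_error_le | exact: closed_loop_bounded]. Qed.

End ClosedLoop.

Theorem theorem3 (R : realType) (m n : nat)
  (A : 'M[R]_m) (B : 'M[R]_(m, n)) (P : 'M[R]_m) (k : R)
  (xg : 'cV[R]_m) (xgbar dbar VT : R)
  (d x xh : R -> 'cV[R]_m) (u : R -> 'cV[R]_n) (ts : nat -> R) :
  0 < Smax A ->
  0 < k ->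
  (* P symmetric positive definite solving the Riccati equation *)
  P^T = P ->
  (forall v : 'cV[R]_m, v != 0 -> 0 < (v^T *m P *m v) 0 0) ->
  A^T *m P + P *m A - 2 *: (P *m B *m B^T *m P) + k%:M = 0 ->
  (* goal and disturbance *)
  vnorm xg <= xgbar ->
  (forall i : 'I_m, {within [set t : R | 0 <= t], continuous (fun t => d t i 0)}) ->
  (forall t, 0 <= t -> vnorm (d t) <= dbar) ->
  (* servicing instants *)
  ts 0%N = 0 ->
  (forall s, ts s < ts s.+1) ->
  (forall M : R, exists N : nat, forall s, (N <= s)%N -> M <= ts s) ->
  (* controller *)
  (forall t, 0 <= t -> u t = B^T *m P *m (xg - xh t)) ->
  (* plant: x continuous on [0,oo), solves the ODE between servicing instants *)
  (forall i : 'I_m, {within [set t : R | 0 <= t], continuous (fun t => x t i 0)}) ->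
  (forall s t, ts s < t < ts s.+1 -> forall i : 'I_m,
      is_derive t 1 (fun r => x r i 0) ((A *m x t + B *m u t + d t) i 0)) ->
  (* estimator: right-continuous, reset at servicing instants *)
  (forall s (i : 'I_m),
      {within [set t : R | ts s <= t < ts s.+1], continuous (fun t => xh t i 0)}) ->
  (forall s t, ts s < t < ts s.+1 -> forall i : 'I_m,
      is_derive t 1 (fun r => xh r i 0) ((- (A *m (xg - xh t)) + B *m u t) i 0)) ->
  (forall s, xh (ts s) = x (ts s)) ->
  (* servicing condition *)
  0 < VT ->
  (forall s, 0 < Smax A * xgbar + dbar ->
     ts s.+1 - ts s <= (Smax A)^-1 * ln (VT * Smax A / (Smax A * xgbar + dbar) + 1)) ->
  let rho := 2 * dbar * Smax P + 2 * VT * Smax (P *m B *m B^T *m P)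
             + 2 * Smax (P *m A) * xgbar in
  (forall t, 0 <= t ->
     vnorm (xg - x t) <=
       lambda_max P * rho / (lambda_min P * k)
         * (1 - expR (- (k / (2 * lambda_max P)) * t))
       + Num.sqrt (lambda_max P / lambda_min P) * vnorm (xg - x 0)
         * expR (- (k / (2 * lambda_max P)) * t))
  /\ (exists M : R, forall t, 0 <= t ->
        [/\ vnorm (xg - x t) <= M, vnorm (xg - xh t) <= M & vnorm (u t) <= M]).
Proof.
case: m A B P xg d x xh => [|m] A B P xg d x xh; first by rewrite Smax_mx0 ltxx.
move=> SA_gt0 k_gt0 P_sym P_pd riccati xg_le _ d_le ts0 ts_lt ts_unbounded u_def
  x_cont x_deriv xh_cont xh_deriv xh_reset VT_gt0 dwell.
by apply: (closed_loop_guarantees _ _ _ A B P k xg xgbar dbar VT d x xh u ts).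
Qed.
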